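(* Let $A\in\mathbb{R}^{n\times n}$, $\bm{u},\bm{v},\bm{g}\in\mathbb{R}^n$ with $\bm{g}-A\bm{u}\ne0$ and $\bm{v}\ne0$. Perform $m$ Arnoldi steps for $A$ with starting vector $\bm{g}-A\bm{u}$, giving $V_m^{(\psi)},\bm{v}_{m+1}^{(\psi)},H_m^{(\psi)},h_{m+1,m}^{(\psi)}\ge0$ with $AV_m^{(\psi)}=V_m^{(\psi)}H_m^{(\psi)}+h^{(\psi)}_{m+1,m}\bm{v}^{(\psi)}_{m+1}\bm{e}_m^T$, and $m$ Arnoldi steps for $A$ with starting vector $\bm{v}$, giving $V_m^{(\sigma)},\bm{v}_{m+1}^{(\sigma)},H_m^{(\sigma)},h_{m+1,m}^{(\sigma)}\ge0$ analogously. Let $u^{(\psi)}$ solve $u''=-H_m^{(\psi)}u+\|\bm{g}-A\bm{u}\|\bm{e}_1$, $u(0)=u'(0)=0$, and $u^{(\sigma)}$ solve $u''=-H_m^{(\sigma)}u$, $u(0)=0$, $u'(0)=\|\bm{v}\|\bm{e}_1$, and set $\bm{y}_m(t)=\bm{u}+V_m^{(\psi)}u^{(\psi)}(t)+V_m^{(\sigma)}u^{(\sigma)}(t)$ and $\bm{r}_m(t)=-A\bm{y}_m(t)+\bm{g}-\bm{y}_m''(t)$. Then for all $t\ge0$, $$\|\bm{r}_m(t)\|\le h^{(\psi)}_{m+1,m}\,t\varphi(-t\hat\omega^{(\psi)})\|\bm{g}-A\bm{u}\|+h^{(\sigma)}_{m+1,m}\,t\varphi(-t\hat\omega^{(\sigma)})\|\bm{v}\|\le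 t\varphi(-t\hat\omega)\big(h^{(\psi)}_{m+1,m}\|\bm{g}-A\bm{u}\|+h^{(\sigma)}_{m+1,m}\|\bm{v}\|\big),$$ where $\hat\omega^{(\psi)}=-\tfrac12\|H_m^{(\psi)}-I\|$, $\hat\omega^{(\sigma)}=-\tfrac12\|H_m^{(\sigma)}-I\|$, $\hat\omega=\min\{\hat\omega^{(\psi)},\hat\omega^{(\sigma)}\}$. In particular, for every $\varepsilon>0$ there is $\delta>0$ with $\|\bm{r}_m(t)\|\le\varepsilon$ for $t\in[0,\delta]$.
   Context: $\varphi(z)=(e^z-1)/z$ with $\varphi(0)=1$. The Arnoldi process with $m$ steps for $A$ and a nonzero starting vector $\bm{w}$ yields $V_m$ with orthonormal columns, first column $\bm{w}/\|\bm{w}\|$, a unit vector $\bm{v}_{m+1}$ orthogonal to the columns of $V_m$, $H_m=V_m^TAV_m$ (upper Hessenberg) and $h_{m+1,m}\ge0$ with $AV_m=V_mH_m+h_{m+1,m}\bm{v}_{m+1}\bm{e}_m^T$. $\|\cdot\|$ is the Euclidean / spectral norm, $\bm{e}_j$ canonical unit vectors. *)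

From HB Require Import structures.
From mathcomp Require Import all_boot all_order all_algebra.
From mathcomp Require Import all_classical all_reals all_analysis.
Set Implicit Arguments. Unset Strict Implicit. Unset Printing Implicit Defensive.
Import Order.TTheory GRing.Theory Num.Theory.
Local Open Scope ring_scope.
Local Open Scope classical_set_scope.

(* Euclidean norm of a column vector (NOT mathcomp-analysis' max-norm `|x|). *)
Definition enorm {R : realType} {n : nat} (x : 'cV[R]_n) : R :=
  Num.sqrt (\sum_(i < n) x i ord0 ^+ 2).

Definition snorm {R : realType} {p q : nat} (M : 'M[R]_(p, q)) : R :=
  sup [set enorm (M *m x) | x in [set x : 'cV[R]_q | enorm x = 1]].

Definition phi {R : realType} (z : R) : R :=
  if z == 0 then 1 else (expR z - 1) / z.

Definition evec {R : realType} {k : nat} (j : 'I_k) : 'cV[R]_k :=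
  \col_(i < k) (if i == j then 1 else 0).

Definition arnoldi_output {R : realType} {n k : nat} (A : 'M[R]_n)
  (w : 'cV[R]_n) (V : 'M[R]_(n, k.+1)) (vnext : 'cV[R]_n)
  (H : 'M[R]_k.+1) (h : R) : Prop :=
  V^T *m V = 1%:M /\
  col ord0 V = (enorm w)^-1 *: w /\
  enorm vnext = 1 /\
  V^T *m vnext = 0 /\
  H = V^T *m A *m V /\
  (forall i j : 'I_k.+1, (j.+1 < i)%N -> H i j = 0) /\
  0 <= h /\
  A *m V = V *m H + h *: (vnext *m (evec (@ord_max k))^T).

Definition ode2_sol {R : realType} {k : nat} (H : 'M[R]_k.+1) (c : R)
  (u0 u1 : 'cV[R]_k.+1) (u : R -> 'cV[R]_k.+1) : Prop :=
  [/\ forall t : R, derivable u t 1,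
      forall t : R, derivable (derive1 u) t 1,
      forall t : R, derive1 (derive1 u) t = - (H *m u t) + c *: evec ord0,
      u 0 = u0 &
      derive1 u 0 = u1].

(* By the Arnoldi relation A V = V H + h v_{m+1} e_m^T and the projected ODEs, the
   residual equals -h^(psi) u^(psi)_m(t) v^(psi)_{m+1} - h^(sig) u^(sig)_m(t) v^(sig)_{m+1},
   so it suffices to bound the last entries of the projected solutions.  For
   u'' = -H u + c e_1 the energy E = |u|^2 + |u'|^2 satisfies
   E' = 2 (-<(H - I) u, u'> + c u'_1) <= 2 (mu E + c sqrt E) with mu = ||H - I|| / 2,
   and a Gronwall argument gives sqrt E(t) <= sqrt E(0) e^(mu t) + c t phi(mu t).
   In the forced problem this bounds u(t) directly; in the free one it bounds
   |u'(s)| <= ||v|| e^(mu s), which integrates to ||v|| t phi(mu t).  Monotonicity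
   of mu |-> t phi(mu t) gives the second inequality, and t phi(mu t) <= t e^mu on
   [0, 1] the limit statement. *)

From HB Require Import structures.
From mathcomp Require Import all_boot all_order all_algebra.
From mathcomp Require Import all_classical all_reals all_analysis.
From mathcomp Require Import ring lra.
Import Order.TTheory GRing.Theory Num.Theory.
Local Open Scope ring_scope.
Set Implicit Arguments.
Unset Strict Implicit.

Section EuclideanNorm.
Variables (R : realType) (k : nat).
Implicit Types x y z : 'cV[R]_k.

Definition dot x y : R := \sum_(i < k) x i ord0 * y i ord0.

Lemma dotC x y : dot x y = dot y x.
Proof. by apply: eq_bigr => i _; rewrite mulrC. Qed.

Lemma dotDl x y z : dot (x + y) z = dot x z + dot y z.
Proof. by rewrite /dot -big_split; apply: eq_bigr => i _; rewrite mxE mulrDl. Qed.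

Lemma dotZl c x y : dot (c *: x) y = c * dot x y.
Proof. by rewrite /dot mulr_sumr; apply: eq_bigr => i _; rewrite mxE mulrA. Qed.

Lemma dotNl x y : dot (- x) y = - dot x y.
Proof. by rewrite -scaleN1r dotZl mulN1r. Qed.

Lemma dot0l x : dot 0 x = 0.
Proof. by rewrite -(scale0r 0) dotZl mul0r. Qed.

Lemma dot_ge0 x : 0 <= dot x x.
Proof. by apply: sumr_ge0 => i _; rewrite -expr2 sqr_ge0. Qed.

Lemma dot_eq0 x : (dot x x == 0) = (x == 0).
Proof.
apply/idP/eqP => [/eqP|->]; last by rewrite dot0l.
move=> /psumr_eq0P x0; apply/matrixP => i j; rewrite (ord1 j) mxE.
have /eqP : x i ord0 * x i ord0 = 0 by apply: x0 => // l _; rewrite -expr2 sqr_ge0.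
by rewrite -expr2 sqrf_eq0 => /eqP.
Qed.

Lemma dot_evec (j : 'I_k) x : dot (evec j) x = x j ord0.
Proof.
rewrite /dot (bigD1 j) //= big1 ?addr0; first by rewrite mxE eqxx mul1r.
by move=> i /negbTE ij; rewrite mxE ij mul0r.
Qed.

Lemma enormE x : enorm x = Num.sqrt (dot x x).
Proof. by rewrite /enorm /dot; under eq_bigr do rewrite expr2. Qed.

Lemma enorm_ge0 x : 0 <= enorm x.
Proof. by rewrite enormE sqrtr_ge0. Qed.

Lemma enorm_sqr x : enorm x ^+ 2 = dot x x.
Proof. by rewrite enormE sqr_sqrtr // dot_ge0. Qed.

Lemma enorm_eq0 x : (enorm x == 0) = (x == 0).
Proof. by rewrite enormE sqrtr_eq0 le_eqVlt ltNge dot_ge0 orbF dot_eq0. Qed.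

Lemma enorm_gt0 x : (0 < enorm x) = (x != 0).
Proof. by rewrite lt_def enorm_ge0 enorm_eq0 andbT. Qed.

Lemma enorm0 : enorm (0 : 'cV[R]_k) = 0.
Proof. by apply/eqP; rewrite enorm_eq0. Qed.

Lemma enormZ c x : enorm (c *: x) = `|c| * enorm x.
Proof.
by rewrite !enormE dotZl dotC dotZl mulrA -expr2 sqrtrM ?sqr_ge0 // sqrtr_sqr.
Qed.

Lemma enormN x : enorm (- x) = enorm x.
Proof. by rewrite -scaleN1r enormZ normrN normr1 mul1r. Qed.

Lemma ler_entry_enorm x i : `|x i ord0| <= enorm x.
Proof.
rewrite enormE -sqrtr_sqr ler_wsqrtr // /dot (bigD1 i) //= expr2 lerDl.
by apply: sumr_ge0 => l _; rewrite -expr2 sqr_ge0.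
Qed.

(* Expand [0 <= dot z z] for [z = enorm y *: x - enorm x *: y]. *)
Lemma dot_le_enorm x y : dot x y <= enorm x * enorm y.
Proof.
set a := enorm x; set b := enorm y.
have [->|x0] := eqVneq x 0; first by rewrite dot0l mulr_ge0 ?enorm_ge0.
have [->|y0] := eqVneq y 0; first by rewrite dotC dot0l mulr_ge0 ?enorm_ge0.
have ab0 : 0 < a * b by rewrite mulr_gt0 ?enorm_gt0.
have := dot_ge0 (b *: x - a *: y).
rewrite !(dotDl, dotNl, dotZl) !(dotC _ (_ - _)) !(dotDl, dotNl, dotZl).
rewrite -!enorm_sqr -/a -/b (dotC y x) => h.
by rewrite -subr_ge0 -(pmulr_rge0 _ ab0); nra.
Qed.

Lemma dot_CauchySchwarz x y : `|dot x y| <= enorm x * enorm y.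
Proof.
rewrite ler_norml dot_le_enorm andbT lerNl -dotNl -(enormN x).
exact: dot_le_enorm.
Qed.

Lemma ler_enormD x y : enorm (x + y) <= enorm x + enorm y.
Proof.
rewrite -(ler_pXn2r (_ : 0 < 2)%N) ?nnegrE ?addr_ge0 ?enorm_ge0 //.
rewrite sqrrD !enorm_sqr dotDl !(dotC _ (_ + _)) !dotDl (dotC y x).
have := dot_le_enorm x y; rewrite mulr2n; lra.
Qed.

End EuclideanNorm.

Lemma enorm_evec0 (R : realType) (k : nat) : enorm (evec ord0 : 'cV[R]_k.+1) = 1.
Proof. by rewrite enormE dot_evec mxE eqxx sqrtr1. Qed.

Section SpectralNorm.
Variables (R : realType) (p q : nat).
Implicit Types (M : 'M[R]_(p, q)) (x : 'cV[R]_q).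

(* The Frobenius norm bounds the set whose supremum is [snorm M]. *)
Lemma enorm_mulmx_le_frobenius M x :
  enorm (M *m x) <= Num.sqrt (\sum_(i < p) enorm (row i M)^T ^+ 2) * enorm x.
Proof.
rewrite -[enorm x]ger0_norm ?enorm_ge0 // -sqrtr_sqr -sqrtrM; last first.
  by apply: sumr_ge0 => i _; rewrite sqr_ge0.
rewrite enormE ler_wsqrtr // mulr_suml /dot; apply: ler_sum => i _.
have -> : (M *m x) i ord0 = dot (row i M)^T x.
  by rewrite mxE /dot; apply: eq_bigr => j _; rewrite !mxE.
rewrite -expr2 -exprMn -real_normK ?num_real //.
rewrite lerXn2r ?nnegrE ?normr_ge0 ?mulr_ge0 ?enorm_ge0 //.
by rewrite (le_trans (dot_CauchySchwarz _ _)) // ger0_norm ?mulr_ge0 ?enorm_ge0.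
Qed.

Lemma enorm_mulmx_unit_le M x : enorm x = 1 -> enorm (M *m x) <= snorm M.
Proof.
move=> x1; apply: ub_le_sup; last by exists x.
exists (Num.sqrt (\sum_(i < p) enorm (row i M)^T ^+ 2)) => _ [y /= y1 <-].
by rewrite (le_trans (enorm_mulmx_le_frobenius _ _)) // y1 mulr1.
Qed.

Lemma enorm_mulmx_le M x : enorm (M *m x) <= snorm M * enorm x.
Proof.
have [->|x0] := eqVneq x 0; first by rewrite mulmx0 !enorm0 mulr0.
have ex0 : 0 < enorm x by rewrite enorm_gt0.
have x1 : enorm ((enorm x)^-1 *: x) = 1.
  by rewrite enormZ ger0_norm ?invr_ge0 ?enorm_ge0 // mulVf ?gt_eqF.
have := enorm_mulmx_unit_le M x1.
by rewrite -scalemxAr enormZ ger0_norm ?invr_ge0 ?enorm_ge0 // ler_pdivrMl // mulrC.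
Qed.

End SpectralNorm.

Lemma snorm_ge0 (R : realType) (p q : nat) (M : 'M[R]_(p, q.+1)) : 0 <= snorm M.
Proof. by apply: le_trans (enorm_mulmx_unit_le M (enorm_evec0 R q)); apply: enorm_ge0. Qed.

Section RealComparison.
Variable R : realType.
Implicit Types (f g df dg : R -> R) (mu t : R).

Lemma le_at0_of_derive_le0 f df : (forall x : R, is_derive x 1 f (df x)) ->
  (forall x, 0 < x -> df x <= 0) -> forall t, 0 <= t -> f t <= f 0.
Proof.
move=> fdf df_le0 t t0.
have fder x : derivable f x 1 by case: (fdf x).
have t_itv : t \in `[0, t] by rewrite in_itv /= lexx t0.
have O_itv : 0 \in `[0, t] by rewrite in_itv /= lexx t0.
apply: (@ler0_derive1_le_cc R f 0 t) => //.
- by move=> x; rewrite in_itv /= derive1E derive_val => /andP[/df_le0].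
- by apply: derivable_within_continuous => x _; apply: fder.
Qed.

Lemma derive_le_sub f g df dg :
  (forall x : R, is_derive x 1 f (df x)) -> (forall x : R, is_derive x 1 g (dg x)) ->
  (forall x, 0 < x -> df x <= dg x) -> forall t, 0 <= t -> f t - f 0 <= g t - g 0.
Proof.
move=> fdf gdg dfg t t0.
suff : (f - g) t <= (f - g) 0 by rewrite !fctE; lra.
apply: (le_at0_of_derive_le0 (fun x => is_deriveB (fdf x) (gdg x))) t0 => x /dfg.
by rewrite subr_le0.
Qed.

Lemma abs_le_of_derive_abs_le f df g dg :
  (forall x : R, is_derive x 1 f (df x)) -> (forall x : R, is_derive x 1 g (dg x)) ->
  f 0 = 0 -> g 0 = 0 -> (forall x, 0 < x -> `|df x| <= dg x) ->
  forall t, 0 <= t -> `|f t| <= g t.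
Proof.
move=> fdf gdg f0 g0 dfg t t0; rewrite ler_norml; apply/andP; split.
  have := derive_le_sub (fun x => is_deriveN (fdf x)) gdg _ t0.
  rewrite !fctE f0 g0 oppr0 !subr0 lerNl addr0; apply=> x /dfg.
  by rewrite ler_norml lerNl => /andP[].
have := derive_le_sub fdf gdg _ t0; rewrite f0 g0 !subr0; apply=> x /dfg.
by rewrite ler_norml => /andP[].
Qed.

Lemma is_derive_expRM mu (x : R) : is_derive x 1 (fun s => expR (mu * s)) (mu * expR (mu * x)).
Proof.
rewrite mulrC; apply: (@is_derive1_comp _ expR (mu *: id)).
by apply: is_derive_eq; rewrite scaler1.
Qed.

(* [expint mu t] is the integral of [s |-> expR (mu * s)] over [0, t]. *)
Definition expint mu t : R := if mu == 0 then t else (expR (mu * t) - 1) / mu.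

Lemma expintE mu t : expint mu t = t * phi (mu * t).
Proof.
rewrite /expint /phi; have [->|mu0] := eqVneq mu 0; first by rewrite mul0r eqxx mulr1.
have [->|t0] := eqVneq t 0; first by rewrite mulr0 eqxx expR0 subrr !mul0r.
by rewrite mulf_eq0 (negbTE mu0) (negbTE t0) /=; field; rewrite t0 mu0.
Qed.

Lemma expint0 mu : expint mu 0 = 0.
Proof. by rewrite expintE mul0r. Qed.

Lemma is_derive_expint mu (x : R) : is_derive x 1 (expint mu) (expR (mu * x)).
Proof.
rewrite /expint; have [->|mu0] := eqVneq mu 0.
  by rewrite mul0r expR0; apply: is_derive_id.
have -> : (fun t => (expR (mu * t) - 1) / mu) = mu^-1 *: ((fun t => expR (mu * t)) - cst 1).
  by apply/funext => t; rewrite !fctE mulrC.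
apply: is_derive_eq.
by rewrite scaler1 subr0 -[_ *: _]/(mu^-1 * _) mulrCA mulVf ?mulr1.
Qed.

Lemma expintNK mu t : expint (- mu) t * expR (mu * t) = expint mu t.
Proof.
rewrite /expint oppr_eq0; have [->|mu0] := eqVneq mu 0; first by rewrite mul0r expR0 mulr1.
by rewrite mulNr expRN; field; rewrite mu0 gt_eqF ?expR_gt0.
Qed.

Lemma expint_ler mu mu' t : mu <= mu' -> 0 <= t -> expint mu t <= expint mu' t.
Proof.
move=> le_mu t0; rewrite -subr_ge0.
have := derive_le_sub (is_derive_expint mu) (is_derive_expint mu') _ t0.
by rewrite !expint0 !subr0 subr_ge0; apply => x x0; rewrite ler_expR ler_pM2r.
Qed.

Lemma expint_le_expR mu t : 0 <= mu -> 0 <= t -> expint mu t <= t * expR (mu * t).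
Proof.
move=> mu0 t0; have := derive_le_sub (is_derive_expint mu)
  (fun x => is_deriveM (is_derive_id x 1) (is_derive_expRM mu x)) _ t0.
rewrite !fctE expint0 mul0r !subr0; apply => x x0 /=.
by rewrite scaler1 -[x *: _]/(x * _) lerDr !mulr_ge0 // ?ltW ?expR_gt0.
Qed.

End RealComparison.

Section Gronwall.
Variable R : realType.
Implicit Types (mu c t : R).

Lemma gronwall_linear (N dN : R -> R) mu c :
  (forall x : R, is_derive x 1 N (dN x)) -> (forall x, 0 < x -> dN x <= mu * N x + c) ->
  forall t, 0 <= t -> N t <= N 0 * expR (mu * t) + c * expint mu t.
Proof.
move=> NdN dN_le t t0.
(* [(N e^(-mu s))' <= c e^(-mu s) = (c * expint (- mu))'] *)
have key : N t * expR (- mu * t) - N 0 <= c * expint (- mu) t.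
  have := derive_le_sub (fun x => is_deriveM (NdN x) (is_derive_expRM (- mu) x))
    (fun x => is_deriveZ c (is_derive_expint (- mu) x)) _ t0.
  rewrite /= !fctE expint0 scaler0 subr0 mulr0 expR0 mulr1; apply=> x /dN_le dNx.
  rewrite -[_ *: _]/(_ * _) -[_ *: _]/(_ * _) -[_ *: _]/(_ * _).
  have := expR_gt0 (- mu * x); nra.
rewrite -(ler_pM2r (expR_gt0 (- mu * t))) mulrDl -mulrA -expRD mulNr addrN expR0 mulr1.
rewrite -mulrA -expintNK mulrAC -mulrA -expRD addNr expR0.
by rewrite mulr1 -mulNr; lra.
Qed.

(* Applied to [N = sqrt (E + eps^2)], which is differentiable even where [E] vanishes. *)
Lemma sqrt_gronwall (E dE : R -> R) mu c : 0 <= mu -> 0 <= c ->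
  (forall x, 0 <= E x) -> (forall x : R, is_derive x 1 E (dE x)) ->
  (forall x, 0 < x -> dE x <= 2 * (mu * E x + c * Num.sqrt (E x))) ->
  forall t, 0 <= t -> Num.sqrt (E t) <= Num.sqrt (E 0) * expR (mu * t) + c * expint mu t.
Proof.
move=> mu0 c0 E0 EdE dE_le t t0.
apply/ler_addgt0Pr => e e0.
pose eps := e / expR (mu * t).
have eps0 : 0 < eps by rewrite divr_gt0 ?expR_gt0.
pose N x := Num.sqrt (E x + eps ^+ 2).
have Epos x : 0 < E x + eps ^+ 2 by rewrite ltr_wpDl ?exprn_gt0.
have NdN (x : R) : is_derive x 1 N ((2 * N x)^-1 * (dE x + 0)).
  apply: (@is_derive1_comp _ Num.sqrt (E + cst (eps ^+ 2))).
  exact: is_derive1_sqrt (Epos x).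
have sqrtE_le x : Num.sqrt (E x) <= N x by rewrite ler_wsqrtr // lerDl sqr_ge0.
have dN_le x : 0 < x -> (2 * N x)^-1 * (dE x + 0) <= mu * N x + c.
  move=> x0; have N0 : 0 < N x by rewrite sqrtr_gt0.
  have NN : N x ^+ 2 = E x + eps ^+ 2 by rewrite sqr_sqrtr ?ltW.
  rewrite addr0 ler_pdivrMl ?mulr_gt0 //; apply: le_trans (dE_le x x0) _.
  have := sqrtE_le x; have := sqrtr_ge0 (E x); nra.
have N0_le : N 0 <= Num.sqrt (E 0) + eps.
  rewrite -(@ger0_norm _ (Num.sqrt (E 0) + eps)) ?addr_ge0 ?sqrtr_ge0 ?(ltW eps0) //.
  rewrite /N -sqrtr_sqr ler_wsqrtr // sqrrD sqr_sqrtr //.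
  have := sqrtr_ge0 (E 0); nra.
have := gronwall_linear NdN dN_le t0; have := sqrtE_le t.
have := ler_wpM2r (ltW (expR_gt0 (mu * t))) N0_le.
by rewrite mulrDl divfK ?gt_eqF ?expR_gt0 //; lra.
Qed.

End Gronwall.

Section MatrixDerivative.
Variable R : realType.

Lemma is_derive_entry p q (F : R -> 'M[R]_(p, q)) (t : R) i j : derivable F t 1 ->
  is_derive t 1 (fun s => F s i j) (derive1 F t i j).
Proof.
move=> dF; rewrite derive1E derive_mx // mxE.
exact/derivableP/(derivable_mxP F t 1).1.
Qed.

Lemma is_derive_mx p q (F : R -> 'M[R]_(p, q)) (t : R) (G : 'M[R]_(p, q)) :
  (forall i j, is_derive t 1 (fun s => F s i j) (G i j)) -> is_derive t 1 F G.
Proof.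
move=> FG; have dF : derivable F t 1 by apply/derivable_mxP => i j; case: (FG i j).
apply: DeriveDef => //; rewrite derive_mx //; apply/matrixP => i j.
by rewrite mxE derive_val.
Qed.

Lemma is_derive_mulmx r p q (P : 'M[R]_(r, p)) (F : R -> 'M[R]_(p, q)) (t : R) :
  derivable F t 1 -> is_derive t 1 (fun s => P *m F s) (P *m derive1 F t).
Proof.
move=> dF; apply: is_derive_mx => i j.
have -> : (fun s => (P *m F s) i j) = \sum_(l < p) (P i l *: (fun s => F s l j)).
  by apply/funext => s; rewrite mxE fct_sumE.
by rewrite mxE; apply: is_derive_sum => l; apply/is_deriveZ/is_derive_entry.
Qed.

Lemma is_derive_dot k (f g : R -> 'cV[R]_k) (t : R) : derivable f t 1 -> derivable g t 1 ->
  is_derive t 1 (fun s => dot (f s) (g s)) (dot (derive1 f t) (g t) + dot (f t) (derive1 g t)).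
Proof.
move=> df dg.
have -> : (fun s => dot (f s) (g s)) =
    \sum_(i < k) ((fun s => f s i ord0) * (fun s => g s i ord0)).
  by apply/funext => s; rewrite /dot fct_sumE.
apply: is_derive_eq; first by apply: is_derive_sum => i;
  apply: is_deriveM; apply: is_derive_entry.
rewrite /dot -big_split; apply: eq_bigr => i _ /=.
rewrite -[_ *: derive1 g _ _ _]/(_ * _) -[_ *: derive1 f _ _ _]/(_ * _).
by rewrite addrC mulrC (mulrC (g t i ord0)).
Qed.

End MatrixDerivative.

Definition ode_energy (R : realType) (k : nat) (u : R -> 'cV[R]_k) (s : R) : R :=
  dot (u s) (u s) + dot (derive1 u s) (derive1 u s).

Section SecondOrderODE.
Variables (R : realType) (k : nat) (H : 'M[R]_k.+1) (c : R) (u0 u1 : 'cV[R]_k.+1).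
Variable u : R -> 'cV[R]_k.+1.
Hypotheses (c0 : 0 <= c) (usol : ode2_sol H c u0 u1 u).

Let mu := snorm (H - 1%:M) / 2.

Lemma ode_energy_ge0 (s : R) : 0 <= ode_energy u s.
Proof. by rewrite addr_ge0 ?dot_ge0. Qed.

Lemma ode2_energy_derive (s : R) :
  is_derive s 1 (ode_energy u) (2 * (dot (u s) (derive1 u s) +
                                     dot (derive1 u s) (derive1 (derive1 u) s))).
Proof.
have [du ddu _ _ _] := usol.
apply: is_derive_eq; first by apply: is_deriveD; apply: is_derive_dot.
by rewrite !(dotC (derive1 (derive1 u) s)) !(dotC (derive1 u s) (u s)); ring.
Qed.

Lemma ode2_energy_derive_le (s : R) :
  2 * (dot (u s) (derive1 u s) + dot (derive1 u s) (derive1 (derive1 u) s))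
    <= 2 * (mu * ode_energy u s + c * Num.sqrt (ode_energy u s)).
Proof.
have [_ _ ode _ _] := usol.
set a := enorm (u s); set b := enorm (derive1 u s).
have energyE : ode_energy u s = a ^+ 2 + b ^+ 2 by rewrite !enorm_sqr.
have b_le : b <= Num.sqrt (ode_energy u s).
  by rewrite /b enormE ler_wsqrtr ?dot_ge0 // /ode_energy lerDr dot_ge0.
have damping : `|dot ((H - 1%:M) *m u s) (derive1 u s)| <= 2 * mu * a * b.
  have -> : 2 * mu = snorm (H - 1%:M) by rewrite /mu mulrC divfK ?pnatr_eq0.
  apply: le_trans (dot_CauchySchwarz _ _) _.
  by rewrite ler_wpM2r ?enorm_ge0 ?enorm_mulmx_le.
have forcing : c * derive1 u s ord0 ord0 <= c * b.
  by rewrite ler_wpM2l // (le_trans (ler_norm _)) ?ler_entry_enorm.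
have amgm : 2 * mu * a * b <= mu * (a ^+ 2 + b ^+ 2).
  have mu0 : 0 <= mu by rewrite divr_ge0 ?snorm_ge0.
  have := mulr_ge0 mu0 (sqr_ge0 (a - b)); nra.
rewrite ler_pM2l // ode (dotC (derive1 u s)) dotDl dotNl dotZl dot_evec addrA.
have -> : dot (u s) (derive1 u s) - dot (H *m u s) (derive1 u s) =
    - dot ((H - 1%:M) *m u s) (derive1 u s) by rewrite mulmxBl mul1mx dotDl dotNl; ring.
move: damping; rewrite energyE ler_norml => /andP[damping _].
have := ler_wpM2l c0 b_le; rewrite energyE; lra.
Qed.

Lemma ode2_sqrt_energy_le t : 0 <= t ->
  Num.sqrt (ode_energy u t) <=
    Num.sqrt (dot u0 u0 + dot u1 u1) * expR (mu * t) + c * expint mu t.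
Proof.
have [_ _ _ u_0 du_0] := usol.
rewrite -u_0 -du_0; apply: sqrt_gronwall => //.
- by rewrite divr_ge0 ?snorm_ge0.
- exact: ode_energy_ge0.
- exact: ode2_energy_derive.
- by move=> x _; apply: ode2_energy_derive_le.
Qed.

End SecondOrderODE.

Lemma ode2_forced_entry_le (R : realType) (k : nat) (H : 'M[R]_k.+1) (c : R)
    (u : R -> 'cV[R]_k.+1) (j : 'I_k.+1) :
  0 <= c -> ode2_sol H c 0 0 u -> forall t, 0 <= t ->
  `|u t j ord0| <= c * expint (snorm (H - 1%:M) / 2) t.
Proof.
move=> c0 usol t t0; have := ode2_sqrt_energy_le c0 usol t0.
rewrite dot0l addr0 sqrtr0 mul0r add0r; apply: le_trans.
apply: le_trans (ler_entry_enorm _ j) _.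
by rewrite enormE ler_wsqrtr ?dot_ge0 // /ode_energy lerDl dot_ge0.
Qed.

Lemma ode2_free_entry_le (R : realType) (k : nat) (H : 'M[R]_k.+1) (w : R)
    (u : R -> 'cV[R]_k.+1) (j : 'I_k.+1) :
  0 <= w -> ode2_sol H 0 0 (w *: evec ord0) u -> forall t, 0 <= t ->
  `|u t j ord0| <= w * expint (snorm (H - 1%:M) / 2) t.
Proof.
move=> w0 usol; have [du _ _ u_0 _] := usol.
apply: (abs_le_of_derive_abs_le (fun x => is_derive_entry j ord0 (du x))
  (fun x => is_deriveZ w (is_derive_expint _ x))).
- by rewrite u_0 mxE.
- by rewrite /= expint0 scaler0.
move=> x x0; have := ode2_sqrt_energy_le (lexx 0) usol (ltW x0).
rewrite dot0l add0r mul0r addr0 -enorm_sqr enormZ enorm_evec0 mulr1 (ger0_norm w0).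
rewrite sqrtr_sqr (ger0_norm w0) -[_ *: _]/(_ * _); apply: le_trans.
apply: le_trans (ler_entry_enorm _ j) _.
by rewrite enormE ler_wsqrtr ?dot_ge0 // /ode_energy lerDr dot_ge0.
Qed.

Section ArnoldiDefect.
Variable R : realType.

Lemma mulmx_evec p q (M : 'M[R]_(p, q)) (j : 'I_q) : M *m evec j = col j M.
Proof.
apply/matrixP => i l; rewrite !mxE (bigD1 j) //= big1 ?addr0 => [|i' /negbTE ij].
  by rewrite !mxE eqxx mulr1.
by rewrite !mxE ij mulr0.
Qed.

Lemma trmx_evec_mulmx q (a : 'cV[R]_q) (j : 'I_q) : (evec j)^T *m a = (a j ord0)%:M.
Proof.
rewrite -[LHS]trmxK trmx_mul trmxK mulmx_evec.
by apply/matrixP => i l; rewrite !ord1 !mxE.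
Qed.

Lemma arnoldi_ode2_defect n k (A : 'M[R]_n) w V vnext H h c u0 u1
    (u : R -> 'cV[R]_k.+1) (t : R) :
  arnoldi_output A w V vnext H h -> ode2_sol H c u0 u1 u ->
  A *m (V *m u t) + V *m derive1 (derive1 u) t =
    c *: col ord0 V + (h * u t ord_max ord0) *: vnext.
Proof.
move=> [_ [_ [_ [_ [_ [_ [_ AV]]]]]]] [_ _ ode _ _].
rewrite mulmxA AV ode mulmxDl mulmxDr mulmxN -!scalemxAl -!mulmxA trmx_evec_mulmx.
by rewrite mul_mx_scalar -scalemxAr mulmx_evec scalerA addrACA subrr add0r addrC.
Qed.

Lemma is_derive_affine2 n k (c : 'cV[R]_n) (P Q : 'M[R]_(n, k)) (f g : R -> 'cV[R]_k) (t : R) :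
  derivable f t 1 -> derivable g t 1 ->
  is_derive t 1 (fun s => c + P *m f s + Q *m g s) (P *m derive1 f t + Q *m derive1 g t).
Proof.
move=> df dg; rewrite -[X in is_derive _ _ _ X]add0r addrA.
apply: (is_deriveD (f := fun s => c + P *m f s) (g := fun s => Q *m g s)).
  apply: (is_deriveD (f := cst c) (g := fun s => P *m f s)) => //.
  exact: is_derive_mulmx.
exact: is_derive_mulmx.
Qed.

End ArnoldiDefect.

Lemma expint_small (R : realType) (mu K eps : R) : 0 <= mu -> 0 <= K -> 0 < eps ->
  exists delta, 0 < delta /\ forall t, 0 <= t <= delta -> expint mu t * K <= eps.
Proof.
move=> mu0 K0 eps0; set C := expR mu * K.
have C0 : 0 <= C by rewrite mulr_ge0 // ltW ?expR_gt0.
exists (Num.min 1 (eps / (C + 1))); split; first by rewrite lt_min ltr01 divr_gt0 // ltr_wpDl.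
move=> t /andP[t0]; rewrite le_min => /andP[t1 t_small].
have le_tC : expint mu t * K <= t * C.
  rewrite /C mulrA ler_wpM2r //; apply: le_trans (expint_le_expR mu0 t0) _.
  by rewrite ler_wpM2l // ler_expR ler_piMr.
apply: le_trans le_tC (le_trans (ler_wpM2r C0 t_small) _).
by rewrite mulrAC ler_pdivrMr ?ltr_wpDl // ler_pM2l // lerDl.
Qed.

Section KrylovResidual.
Variables (R : realType) (n m : nat) (A : 'M[R]_n) (u v g : 'cV[R]_n).
Variables (Vpsi : 'M[R]_(n, m.+1)) (vpsi : 'cV[R]_n) (Hpsi : 'M[R]_m.+1) (hpsi : R).
Variables (Vsig : 'M[R]_(n, m.+1)) (vsig : 'cV[R]_n) (Hsig : 'M[R]_m.+1) (hsig : R).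
Variables (upsi usig : R -> 'cV[R]_m.+1).
Hypotheses (w0 : g - A *m u != 0)
  (Apsi : arnoldi_output A (g - A *m u) Vpsi vpsi Hpsi hpsi)
  (Asig : arnoldi_output A v Vsig vsig Hsig hsig)
  (upsi_sol : ode2_sol Hpsi (enorm (g - A *m u)) 0 0 upsi)
  (usig_sol : ode2_sol Hsig 0 0 (enorm v *: evec ord0) usig).

Lemma arnoldi_ode2_residualE (t : R) :
  - (A *m (u + Vpsi *m upsi t + Vsig *m usig t)) + g
    - derive1 (derive1 (fun s => u + Vpsi *m upsi s + Vsig *m usig s)) t =
  - ((hpsi * upsi t ord_max ord0) *: vpsi + (hsig * usig t ord_max ord0) *: vsig).
Proof.
have [dpsi ddpsi _ _ _] := upsi_sol; have [dsig ddsig _ _ _] := usig_sol.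
have dy : derive1 (fun s => u + Vpsi *m upsi s + Vsig *m usig s) =
    fun s => 0 + Vpsi *m derive1 upsi s + Vsig *m derive1 usig s.
  by apply/funext => s; rewrite add0r derive1E; apply: derive_val; apply: is_derive_affine2.
have ddy : derive1 (fun s => 0 + Vpsi *m derive1 upsi s + Vsig *m derive1 usig s) t =
    Vpsi *m derive1 (derive1 upsi) t + Vsig *m derive1 (derive1 usig) t.
  by rewrite derive1E; apply: derive_val; apply: is_derive_affine2.
rewrite dy ddy.
have [_ [col0 _]] := Apsi.
have regroup (a b c d e f : 'cV[R]_n) :
    - (a + b + c) + f - (d + e) = f - a - (b + d) - (c + e).
  by apply/matrixP => i j; rewrite !mxE; ring.
rewrite !mulmxDr regroup (arnoldi_ode2_defect t Apsi upsi_sol).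
rewrite (arnoldi_ode2_defect t Asig usig_sol) col0 scalerA mulfV ?enorm_eq0 //.
by rewrite scale1r scale0r add0r opprD addrA subrr add0r opprD.
Qed.


Lemma arnoldi_ode2_residual_le (t : R) : 0 <= t ->
  enorm (- (A *m (u + Vpsi *m upsi t + Vsig *m usig t)) + g
    - derive1 (derive1 (fun s => u + Vpsi *m upsi s + Vsig *m usig s)) t)
  <= hpsi * expint (snorm (Hpsi - 1%:M) / 2) t * enorm (g - A *m u)
     + hsig * expint (snorm (Hsig - 1%:M) / 2) t * enorm v.
Proof.
have [_ [_ [vpsi1 [_ [_ [_ [hpsi0 _]]]]]]] := Apsi.
have [_ [_ [vsig1 [_ [_ [_ [hsig0 _]]]]]]] := Asig.
move=> t0; rewrite arnoldi_ode2_residualE enormN; apply: le_trans (ler_enormD _ _) _.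
rewrite !enormZ vpsi1 vsig1 !mulr1 !normrM (ger0_norm hpsi0) (ger0_norm hsig0) -!mulrA.
apply: lerD; rewrite ler_wpM2l // mulrC.
  exact: ode2_forced_entry_le (enorm_ge0 _) upsi_sol t t0.
exact: ode2_free_entry_le (enorm_ge0 _) usig_sol t t0.
Qed.

End KrylovResidual.

Unset Implicit Arguments.
Set Strict Implicit.

Theorem proposition2p2 (R : realType) (n m : nat) (A : 'M[R]_n)
  (u v g : 'cV[R]_n)
  (Vpsi : 'M[R]_(n, m.+1)) (vpsi : 'cV[R]_n) (Hpsi : 'M[R]_m.+1) (hpsi : R)
  (Vsig : 'M[R]_(n, m.+1)) (vsig : 'cV[R]_n) (Hsig : 'M[R]_m.+1) (hsig : R)
  (upsi usig : R -> 'cV[R]_m.+1) :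
  g - A *m u != 0 ->
  v != 0 ->
  arnoldi_output A (g - A *m u) Vpsi vpsi Hpsi hpsi ->
  arnoldi_output A v Vsig vsig Hsig hsig ->
  ode2_sol Hpsi (enorm (g - A *m u)) 0 0 upsi ->
  ode2_sol Hsig 0 0 (enorm v *: evec ord0) usig ->
  let y := fun t : R => u + Vpsi *m upsi t + Vsig *m usig t in
  let r := fun t : R => - (A *m y t) + g - derive1 (derive1 y) t in
  let om_psi := - (snorm (Hpsi - 1%:M)) / 2 in
  let om_sig := - (snorm (Hsig - 1%:M)) / 2 in
  let om := Num.min om_psi om_sig in
  (forall t : R, 0 <= t ->
     enorm (r t) <= hpsi * (t * phi (- t * om_psi)) * enorm (g - A *m u)
                    + hsig * (t * phi (- t * om_sig)) * enorm v
     /\ hpsi * (t * phi (- t * om_psi)) * enorm (g - A *m u)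
          + hsig * (t * phi (- t * om_sig)) * enorm v
        <= t * phi (- t * om) * (hpsi * enorm (g - A *m u) + hsig * enorm v))
  /\ (forall eps : R, 0 < eps -> exists delta : R, 0 < delta /\
        forall t : R, 0 <= t <= delta -> enorm (r t) <= eps).
Proof.
move=> w0 _ Apsi Asig upsi_sol usig_sol y r om_psi om_sig om.
have [_ [_ [_ [_ [_ [_ [hpsi0 _]]]]]]] := Apsi.
have [_ [_ [_ [_ [_ [_ [hsig0 _]]]]]]] := Asig.
have tphiE o t : t * phi (- t * o) = expint (- o) t.
  by rewrite expintE; congr (_ * phi _); ring.
have mpsiE : - om_psi = snorm (Hpsi - 1%:M) / 2 by rewrite /om_psi mulNr opprK.
have msigE : - om_sig = snorm (Hsig - 1%:M) / 2 by rewrite /om_sig mulNr opprK.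
have mpsi_le : - om_psi <= - om by rewrite lerN2 ge_min lexx.
have msig_le : - om_sig <= - om by rewrite lerN2 ge_min lexx orbT.
have r_le t : 0 <= t -> enorm (r t) <=
    hpsi * (t * phi (- t * om_psi)) * enorm (g - A *m u)
      + hsig * (t * phi (- t * om_sig)) * enorm v.
  rewrite !tphiE mpsiE msigE.
  exact: (arnoldi_ode2_residual_le w0 Apsi Asig upsi_sol usig_sol).
have bound_le t : 0 <= t ->
    hpsi * (t * phi (- t * om_psi)) * enorm (g - A *m u)
      + hsig * (t * phi (- t * om_sig)) * enorm v
    <= t * phi (- t * om) * (hpsi * enorm (g - A *m u) + hsig * enorm v).
  move=> t0; rewrite !tphiE mulrDr; apply: lerD;
    rewrite mulrAC [leRHS]mulrC ler_wpM2l ?mulr_ge0 ?enorm_ge0 //; exact: expint_ler.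
split=> [t t0|eps eps0]; first by split; [apply: r_le | apply: bound_le].
have om_ge0 : 0 <= - om by apply: le_trans mpsi_le; rewrite mpsiE divr_ge0 ?snorm_ge0.
have K0 : 0 <= hpsi * enorm (g - A *m u) + hsig * enorm v.
  by rewrite addr_ge0 ?mulr_ge0 ?enorm_ge0.
have [delta [delta0 small]] := expint_small om_ge0 K0 eps0.
exists delta; split=> // t /andP[t0 t_delta].
apply: le_trans (r_le t t0) (le_trans (bound_le t t0) _).
by rewrite tphiE; apply: small; rewrite t0.
Qed.
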